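(* Every normal algebra of differentiable functions $\mathcal V$ is an extension of $R_\ell$; that is, it contains elements $u_i^{(n)}$ ($i\in I$, $n\in\mathbb Z_+$) with $\frac{\partial u_i^{(n)}}{\partial u_j^{(m)}}=\delta_{ij}\delta_{mn}$ for all $i,j,m,n$, which can moreover be chosen so that $\partial u_i^{(n)}=u_i^{(n+1)}$.
   Context: $\mathbb F$ field of characteristic 0, $I=\{1,\dots,\ell\}$. An algebra of differentiable functions is a unital commutative associative algebra $\mathcal V$ with a derivation $\partial$ and commuting derivations $\frac{\partial}{\partial u_i^{(n)}}$, only finitely many nonzero on each element, with $[\frac{\partial}{\partial u_i^{(n)}},\partial]=\frac{\partial}{\partial u_i^{(n-1)}}$ (zero if $n=0$). $R_\ell=\mathbb F[u_i^{(n)}]$ with $\partial u_i^{(n)}=u_i^{(n+1)}$. $\mathcal V_{n,i}=\{f:\frac{\partial f}{\partial u_j^{(m)}}=0$ for $(m,j)>(n,i)$ lexicographically$\}$, $\mathcal V_{n,0}=\mathcal V_{n-1,\ell}$. $\mathcal V$ is normal if $\frac{\partial}{\partial u_i^{(n)}}(\mathcal V_{n,i})=\mathcal V_{n,i}$ for all $i\in I,n\in\mathbb Z_+$. *)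

From HB Require Import structures.
From mathcomp Require Import all_boot all_order all_algebra.
Set Implicit Arguments. Unset Strict Implicit. Unset Printing Implicit Defensive.
Import GRing.Theory.
Local Open Scope ring_scope.

Definition is_derivation (F : fieldType) (V : comAlgType F) (D : V -> V) : Prop :=
  (forall x y : V, D (x + y) = D x + D y) /\
  (forall (a : F) (x : V), D (a *: x) = a *: D x) /\
  (forall x y : V, D (x * y) = D x * y + x * D y).

(* Algebra of differentiable functions in l variables u_i (i : 'I_l, the index
   set I = {1..l} shifted to {0..l-1}): D is the derivation \partial and
   d i n is the partial derivative \partial / \partial u_i^{(n)}. *)
Definition is_alg_diff_fun (F : fieldType) (V : comAlgType F) (l : nat)
    (D : V -> V) (d : 'I_l -> nat -> V -> V) : Prop :=
  is_derivation D /\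
  (forall i n, is_derivation (d i n)) /\
  (forall i n j m (f : V), d i n (d j m f) = d j m (d i n f)) /\
  (forall f : V, exists s : seq ('I_l * nat),
      forall i n, d i n f != 0 -> (i, n) \in s) /\
  (forall i n (f : V),
      d i n (D f) - D (d i n f) =
      match n with 0%N => 0 | n'.+1 => d i n' f end).

Definition Vni (F : fieldType) (V : comAlgType F) (l : nat)
    (d : 'I_l -> nat -> V -> V) (n : nat) (i : 'I_l) (f : V) : Prop :=
  forall (j : 'I_l) (m : nat),
    ((n < m)%N || ((m == n) && (i < j)%N)) -> d j m f = 0.

Definition is_normal (F : fieldType) (V : comAlgType F) (l : nat)
    (d : 'I_l -> nat -> V -> V) : Prop :=
  forall (i : 'I_l) (n : nat),
    (forall f, Vni d n i f -> Vni d n i (d i n f)) /\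
    (forall g, Vni d n i g -> exists f, Vni d n i f /\ d i n f = g).

(* Starting from a preimage of 1 under
   d_{i,0} inside V_{0,i}, one kills its derivatives d_{r,0} for r = i-1, ..., 0
   one at a time, each time subtracting a d_{r,0}-preimage (again by normality)
   of the current d_{r,0}-derivative.  The result is a u_i^{(0)} with
   d_{j,m} u_i^{(0)} = delta_{ij} delta_{0m}; setting u_i^{(n)} = D^n u_i^{(0)},
   the relation [d_{j,m}, D] = d_{j,m-1} propagates the Kronecker deltas. *)

From HB Require Import structures.
From mathcomp Require Import all_boot all_order all_algebra.
Set Implicit Arguments. Unset Strict Implicit. Unset Printing Implicit Defensive.
Import GRing.Theory.
Local Open Scope ring_scope.

Section Derivation.
Variables (F : fieldType) (V : comAlgType F) (D : V -> V).
Hypothesis D_der : is_derivation D.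

Lemma derivation0 : D 0 = 0.
Proof.
have [D_add _] := D_der.
by apply/(addIr (D 0)); rewrite -D_add !add0r.
Qed.

Lemma derivation1 : D 1 = 0.
Proof.
have [_ [_ D_mul]] := D_der.
apply/(addIr (D 1)); rewrite add0r.
by have := D_mul 1 1; rewrite !mulr1 mul1r.
Qed.

Lemma derivationB (x y : V) : D (x - y) = D x - D y.
Proof.
have [D_add _] := D_der.
have D_opp : D (- y) = - D y.
  by apply/(addIr (D y)); rewrite -D_add !addNr derivation0.
by rewrite D_add D_opp.
Qed.

Lemma derivation_if (b : bool) : D (if b then 1 else 0) = 0.
Proof. by case: b; [exact: derivation1 | exact: derivation0]. Qed.

End Derivation.

Section AlgebraOfDifferentiableFunctions.
Variables (F : fieldType) (V : comAlgType F) (l : nat).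
Variable d : 'I_l -> nat -> V -> V.
Hypothesis d_der : forall i n, is_derivation (d i n).
Hypothesis d_comm : forall i n j m f, d i n (d j m f) = d j m (d i n f).

Definition partial_coordinate (i : 'I_l) (k : nat) (f : V) : Prop :=
  [/\ Vni d 0 i f, d i 0 f = 1 & forall j : 'I_l, (k <= j < i)%N -> d j 0 f = 0].

Section Normal.
Hypothesis d_normal : is_normal d.

Lemma partial_coordinate_top (i : 'I_l) : exists f, partial_coordinate i i f.
Proof.
have [_ d_onto] := d_normal i 0%N.
have [f [Vf f1]] : exists f, Vni d 0 i f /\ d i 0 f = 1.
  by apply: d_onto => j m _; exact: derivation1.
by exists f; split=> // j /andP[/leq_ltn_trans lt_ij /lt_ij]; rewrite ltnn.
Qed.

Lemma Vni_partial_coordinate (i r : 'I_l) (f : V) :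
  (r < i)%N -> partial_coordinate i r.+1 f -> Vni d 0 r (d r 0 f).
Proof.
move=> lt_ri [Vf f1 fz] j m /orP[m_gt0 | /andP[/eqP m0 lt_rj]].
  by rewrite d_comm Vf ?m_gt0 // derivation0.
rewrite m0 d_comm; case: (ltngtP j i) => [lt_ji | lt_ij | /val_inj ->].
- by rewrite fz ?lt_rj ?lt_ji // derivation0.
- by rewrite Vf ?lt_ij ?orbT // derivation0.
- by rewrite f1 derivation1.
Qed.

Lemma partial_coordinate_lower (i r : 'I_l) (f : V) :
  (r < i)%N -> partial_coordinate i r.+1 f -> exists g, partial_coordinate i r g.
Proof.
move=> lt_ri fP; have [Vf f1 fz] := fP.
have [_ d_onto] := d_normal r 0%N.
have [h [Vh h1]] := d_onto _ (Vni_partial_coordinate lt_ri fP).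
exists (f - h); split.
- move=> j m jm; rewrite derivationB // Vf // Vh ?subr0 //.
  by case/orP: jm => [-> // | /andP[-> /(ltn_trans lt_ri) ->]]; rewrite orbT.
- by rewrite derivationB // f1 Vh ?subr0 // lt_ri orbT.
- move=> j /andP[]; rewrite leq_eqVlt => /orP[/eqP/val_inj <- _ | lt_rj lt_ji].
    by rewrite derivationB // h1 subrr.
  by rewrite derivationB // fz ?lt_rj // Vh ?subr0 // lt_rj orbT.
Qed.

Lemma partial_coordinate_exists (i : 'I_l) : exists f, partial_coordinate i 0 f.
Proof.
suff /(_ i) : forall t, exists f, partial_coordinate i (i - t) f by rewrite subnn.
elim=> [|t [f fP]]; first by rewrite subn0; exact: partial_coordinate_top.
rewrite subnS; case Ek: (i - t)%N fP => [|k] fP; first by exists f.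
have lt_ki : (k < i)%N by rewrite -Ek leq_subr.
exact: (@partial_coordinate_lower i (Ordinal (ltn_trans lt_ki (ltn_ord i))) f).
Qed.

End Normal.

Lemma partial_coordinate_delta (i : 'I_l) (f : V) : partial_coordinate i 0 f ->
  forall j m, d j m f = if (i == j) && (0%N == m) then 1 else 0.
Proof.
move=> [Vf f1 fz] j [|m]; last by rewrite Vf ?andbF.
rewrite andbT; case: eqVneq => [<- // | neq_ij].
case: (ltngtP j i) => [lt_ji | lt_ij | /val_inj eq_ji].
- by rewrite fz ?lt_ji.
- by rewrite Vf ?lt_ij ?orbT.
- by rewrite eq_ji eqxx in neq_ij.
Qed.

Variable D : V -> V.
Hypothesis D_der : is_derivation D.
Hypothesis d_D_comm : forall i n f,
  d i n (D f) - D (d i n f) = match n with 0%N => 0 | n'.+1 => d i n' f end.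

Lemma delta_derivation (i : 'I_l) (n : nat) (f : V) :
  (forall j m, d j m f = if (i == j) && (n == m) then 1 else 0) ->
  forall j m, d j m (D f) = if (i == j) && (n.+1 == m) then 1 else 0.
Proof.
move=> f_delta j m; have := d_D_comm j m f.
rewrite f_delta derivation_if // subr0 => ->.
by case: m => [|m]; rewrite ?andbF // f_delta.
Qed.

End AlgebraOfDifferentiableFunctions.

Theorem proposition4p3 (F : fieldType) (charF0 : [pchar F] =i pred0)
    (V : comAlgType F) (l : nat) (D : V -> V) (d : 'I_l -> nat -> V -> V) :
  is_alg_diff_fun D d -> is_normal d ->
  exists u : 'I_l -> nat -> V,
    (forall (i j : 'I_l) (n m : nat),
        d j m (u i n) = if (i == j) && (n == m) then 1 else 0) /\
    (forall (i : 'I_l) (n : nat), D (u i n) = u i n.+1).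
Proof.
move=> [D_der [d_der [d_comm [_ d_D_comm]]]] d_normal.
have [u0 u0P] := fin_all_exists (partial_coordinate_exists d_der d_comm d_normal).
exists (fun i n => iter n D (u0 i)); split=> // i + n.
elim: n => [|n IHn]; first exact: partial_coordinate_delta (u0P i).
by rewrite iterS; exact (delta_derivation D_der d_D_comm IHn).
Qed.
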